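(* Let $F$ be a field of characteristic different from $2$, let $Q_1,Q_2,Q_3,Q_4$ be quaternion $F$-algebras with canonical involutions $\gamma_i$, and let $(D,\gamma)=(Q_1,\gamma_1)\otimes(Q_2,\gamma_2)$. Let $u\in D$ be invertible with $\gamma(u)=u$ and $\mathrm{Trd}_D(u)=0$, and suppose there is an isomorphism of algebras with involution $(Q_3,\gamma_3)\otimes(Q_4,\gamma_4)\simeq(D,\mathrm{Int}(u^{-1})\circ\gamma)$. Then the $16$-dimensional quadratic space $(D,q_u)$, where $q_u(x)=\mathrm{Trd}_D(xu\gamma(x))$, contains a totally isotropic subspace of dimension $5$.
   Context: The canonical involution of a quaternion algebra $Q$ is $\gamma_Q(x)=\mathrm{Trd}_Q(x)-x$. $\mathrm{Trd}_D$ is the reduced trace of $D$; $\mathrm{Int}(a)(x)=axa^{-1}$. *)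

(* Concrete model of quaternion algebras (a,b)_F and their
   tensor products, via coordinates in the standard bases. *)
From mathcomp Require Import all_boot all_order all_algebra.
Set Implicit Arguments. Unset Strict Implicit. Unset Printing Implicit Defensive.
Import GRing.Theory.
Local Open Scope ring_scope.

(* basis index of a quaternion algebra: (s,t) stands for i^s j^t,
   so (false,false)=1, (true,false)=i, (false,true)=j, (true,true)=k=ij *)
Notation qidx := (bool * bool)%type.
Notation tidx := (qidx * qidx)%type.
Notation quat F := {ffun qidx -> F^o}.
Notation tens F := {ffun tidx -> F^o}.

Section Quaternions.
Variable F : fieldType.
Local Notation quat := (quat F).
Local Notation tens := (tens F).


Definition qbasis (p : qidx) : quat := [ffun r => (r == p)%:R].
Definition qone : quat := qbasis (false, false).
Definition qxor (p q : qidx) : qidx := (addb p.1 q.1, addb p.2 q.2).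

(* structure constants of (a,b)_F : i^2 = a, j^2 = b, ji = -ij,
   (i^s1 j^t1)(i^s2 j^t2) = qcoef * i^(s1+s2) j^(t1+t2) *)
Definition qcoef (a b : F) (p q : qidx) : F :=
  (if p.2 && q.1 then -1 else 1) * (if p.1 && q.1 then a else 1)
  * (if p.2 && q.2 then b else 1).

Definition qmul (a b : F) (x y : quat) : quat :=
  \sum_(p : qidx) \sum_(q : qidx) (x p * y q * qcoef a b p q) *: qbasis (qxor p q).

Definition qTrd (x : quat) : F := 2%:R * x (false, false).

Definition qgamma (x : quat) : quat := qTrd x *: qone - x.

Definition tpure (x y : quat) : tens := [ffun pq => x pq.1 * y pq.2].
Definition tbasis (pq : tidx) : tens := tpure (qbasis pq.1) (qbasis pq.2).
Definition tone : tens := tpure qone qone.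

(* multiplication of (a1,b1)_F (x) (a2,b2)_F : bilinear extension of
   (x (x) y)(x' (x) y') = x x' (x) y y' *)
Definition tmul (a1 b1 a2 b2 : F) (z w : tens) : tens :=
  \sum_(p : tidx) \sum_(q : tidx)
     (z p * w q) *: tpure (qmul a1 b1 (qbasis p.1) (qbasis q.1))
                          (qmul a2 b2 (qbasis p.2) (qbasis q.2)).

Definition tmap (f g : quat -> quat) (z : tens) : tens :=
  \sum_(p : tidx) z p *: tpure (f (qbasis p.1)) (g (qbasis p.2)).

Definition tgamma : tens -> tens := tmap qgamma qgamma.

(* reduced trace of Q1 (x) Q2 : linear extension of
   Trd_D(x (x) y) = Trd_Q1(x) Trd_Q2(y) *)
Definition tTrd (z : tens) : F :=
  \sum_(p : tidx) z p * (qTrd (qbasis p.1) * qTrd (qbasis p.2)).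

Definition qform (a1 b1 a2 b2 : F) (u x : tens) : F :=
  tTrd (tmul a1 b1 a2 b2 (tmul a1 b1 a2 b2 x u) (tgamma x)).

Definition has_tot_isotropic_subspace (q : tens -> F) (n : nat) : Prop :=
  exists w : 'I_n -> tens,
    (forall c : 'I_n -> F, \sum_(i < n) c i *: w i = 0 -> forall i, c i = 0)
    /\ (forall c : 'I_n -> F, q (\sum_(i < n) c i *: w i) = 0).

End Quaternions.

From mathcomp Require Import all_boot all_order all_algebra.
From mathcomp Require Import ring.
Set Implicit Arguments. Unset Strict Implicit. Unset Printing Implicit Defensive.
Import GRing.Theory.
Local Open Scope ring_scope.

(* Pick X = i ⊗ (al i + be j) in Q3 ⊗ Q4: it is fixed by gamma3 ⊗ gamma4,
   X^2 lies in F, and the two parameters allow Trd_D(u A) = 0 for A = phi(X).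
   Since phi intertwines the involutions, gamma(A) u = u A, so u A is
   gamma-symmetric of trace zero. Put w = gamma(A): then
   q_u(w) = Trd(u A^2) = 0, and b_u(y, w) = Trd(y u A) vanishes for y = 1 and
   for every skew y. A symmetric trace-zero u lies in Q1^0 ⊗ Q2^0, which makes
   Q1 ⊗ 1 and 1 ⊗ Q2 totally isotropic; both are spanned by 1 and skew
   elements, and w, being non-central, lies outside one of them. *)

Definition txor (p q : tidx) : tidx := (qxor p.1 q.1, qxor p.2 q.2).
Definition tidx0 : tidx := ((false, false), (false, false)).

Lemma qxorA : associative qxor.
Proof. by case=> [[] []] [[] []] [[] []]. Qed.

Lemma qxorC : commutative qxor.
Proof. by case=> [[] []] [[] []]. Qed.

Lemma qxor0 p : qxor p (false, false) = p.
Proof. by case: p => [[] []]. Qed.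

Lemma qxorxx p : qxor p p = (false, false).
Proof. by case: p => [[] []]. Qed.

Lemma txorA p q r : txor (txor p q) r = txor p (txor q r).
Proof. by rewrite /txor /= !qxorA. Qed.

Lemma txorC : commutative txor.
Proof. by move=> p q; congr pair; apply: qxorC. Qed.

Lemma txor0 p : txor p tidx0 = p.
Proof. by rewrite /txor !qxor0; case: p. Qed.

Lemma txorxx p : txor p p = tidx0.
Proof. by rewrite /txor !qxorxx. Qed.

Lemma txorKl p q : txor p (txor p q) = q.
Proof. by rewrite -txorA txorxx txorC txor0. Qed.

Lemma txorK p q : txor (txor p q) q = p.
Proof. by rewrite txorA txorxx txor0. Qed.

Lemma txorCA p q r : txor p (txor q r) = txor q (txor p r).
Proof. by rewrite -!txorA (txorC p). Qed.

Lemma txor_eq p q r : (txor p q == r) = (q == txor p r).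
Proof.
apply/eqP/eqP => [<- | ->]; [by rewrite txorKl | exact: txorKl].
Qed.

Section Coordinates.
Variables (R : pzRingType) (T : finType).
Implicit Types f g : {ffun T -> R^o}.

Lemma ffun_addE f g x : (f + g) x = f x + g x.
Proof. by rewrite ffunE. Qed.

Lemma ffun_scaleE (k : R) f x : (k *: f) x = k * f x.
Proof. by rewrite ffunE. Qed.

Lemma ffun_zeroE x : (0 : {ffun T -> R^o}) x = 0.
Proof. by rewrite ffunE. Qed.

End Coordinates.

Section Independence.
Variables (R : idomainType) (T : finType).

Definition free_family n (x : 'I_n -> {ffun T -> R^o}) :=
  forall c : 'I_n -> R, \sum_(i < n) c i *: x i = 0 -> forall i, c i = 0.

Lemma triangular_free n (x : 'I_n -> {ffun T -> R^o}) (r : 'I_n -> T) :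
  (forall i, x i (r i) != 0) -> (forall i j : 'I_n, (j < i)%N -> x j (r i) = 0) ->
  free_family x.
Proof.
move=> xii xji c csum i; have [k] := ubnP (n - i); elim: k i => // k IHk i ltik.
have /eqP := congr1 (fun f : {ffun T -> R^o} => f (r i)) csum.
rewrite sum_ffunE ffun_zeroE (bigD1 i) //= big1 ?addr0.
  by rewrite ffun_scaleE mulf_eq0 (negPf (xii i)) orbF => /eqP.
move=> j nji; rewrite ffun_scaleE; case: (ltngtP j i) => [ltji|ltij|/val_inj eqji].
- by rewrite xji ?mulr0.
- by rewrite IHk ?mul0r // -ltnS (leq_trans _ ltik) // ltnS ltn_sub2l.
- by rewrite eqji eqxx in nji.
Qed.

End Independence.

Lemma self_opp_eq0 (R : idomainType) (k : R) : 2%:R != 0 :> R -> k = - k -> k = 0.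
Proof.
move=> two_neq0 /eqP; rewrite -subr_eq0 opprK -mulr2n -mulr_natr mulf_eq0.
by rewrite (negPf two_neq0) orbF => /eqP.
Qed.

Lemma exists_nonzero_kernel2 (R : comNzRingType) (l1 l2 : R) :
  exists al be : R, (al, be) != (0, 0) /\ al * l1 + be * l2 = 0.
Proof.
have [-> | l1_neq0] := eqVneq l1 0.
  by exists 1, 0; rewrite xpair_eqE oner_eq0 mul0r mulr0 addr0.
by exists l2, (- l1); rewrite xpair_eqE oppr_eq0 (negPf l1_neq0) andbF mulNr mulrC subrr.
Qed.

Section Quaternion.
Variable F : fieldType.

Definition qsign (p : qidx) : F := if p == (false, false) then 1 else -1.

Lemma qbasisE p r : qbasis F p r = (r == p)%:R.
Proof. by rewrite ffunE. Qed.

Lemma qmul_basis a b p q :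
  qmul a b (qbasis F p) (qbasis F q) = qcoef a b p q *: qbasis F (qxor p q).
Proof.
rewrite /qmul (bigD1 p) //= [X in _ + X]big1 ?addr0 => [|p' np]; last first.
  by apply: big1 => q' _; rewrite qbasisE (negPf np) !mul0r scale0r.
rewrite (bigD1 q) //= [X in _ + X]big1 ?addr0 => [|q' nq]; last first.
  by rewrite !qbasisE (negPf nq) mulr0 mul0r scale0r.
by rewrite !qbasisE !eqxx !mul1r.
Qed.

Lemma qgamma_basis p : qgamma (qbasis F p) = qsign p *: qbasis F p.
Proof.
apply/ffunP => r; rewrite /qgamma /qTrd /qone /qsign !ffunE.
case: p r => [[] []] [[] []]; rewrite /= ?mulr0 ?mulr1 ?scale0r ?scale1r ?scaleN1r
  ?scaler0 ?subr0 ?sub0r ?oppr0 //.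
by rewrite scaler_nat mulr2n addrK.
Qed.

(* associativity of (a,b)_F on the basis *)
Lemma qcoef_assoc (a b : F) p s r :
  qcoef a b p (qxor p s) * qcoef a b s (qxor s r)
  = qcoef a b (qxor p s) (qxor s r) * qcoef a b p (qxor p r).
Proof. by case: p s r => [[] []] [[] []] [[] []]; rewrite /qcoef /=; ring. Qed.

(* qgamma(e_p e_q) = qgamma(e_q) qgamma(e_p) on the basis *)
Lemma qcoef_rev (a b : F) p r :
  qsign r * qcoef a b p (qxor p r) = qsign (qxor p r) * qsign p * qcoef a b (qxor p r) p.
Proof. by case: p r => [[] []] [[] []]; rewrite /qsign /qcoef /=; ring. Qed.

End Quaternion.

Section Tensor.
Variables (F : fieldType) (a1 b1 a2 b2 : F).
Local Notation tens := (tens F).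
Local Notation mul := (tmul a1 b1 a2 b2).
Implicit Types x y z : tens.

Definition tsign (p : tidx) : F := qsign F p.1 * qsign F p.2.
Definition tcoef (p q : tidx) : F := qcoef a1 b1 p.1 q.1 * qcoef a2 b2 p.2 q.2.

Lemma tbasisE p r : tbasis F p r = (r == p)%:R.
Proof.
rewrite /tbasis /tpure ffunE !qbasisE -natrM mulnb.
by case: r p => [r1 r2] [p1 p2]; rewrite xpair_eqE.
Qed.

Lemma toneE r : tone F r = (r == tidx0)%:R.
Proof. by rewrite -tbasisE. Qed.

Lemma tpureZ k l (x y : quat F) : tpure (k *: x) (l *: y) = (k * l) *: tpure x y.
Proof. by apply/ffunP => r; rewrite !ffunE mulrACA. Qed.

Lemma tmul_sum x y :
  mul x y = \sum_p \sum_q (x p * y q * tcoef p q) *: tbasis F (txor p q).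
Proof.
apply: eq_bigr => p _; apply: eq_bigr => q _.
by rewrite !qmul_basis tpureZ scalerA.
Qed.

Lemma tmulE x y r : mul x y r = \sum_p x p * y (txor p r) * tcoef p (txor p r).
Proof.
rewrite tmul_sum sum_ffunE; apply: eq_bigr => p _.
rewrite sum_ffunE (bigD1 (txor p r)) //= big1 ?addr0 => [|q nq].
  by rewrite ffun_scaleE tbasisE eq_sym txor_eq eqxx mulr1.
by rewrite ffun_scaleE tbasisE eq_sym txor_eq (negPf nq) mulr0.
Qed.

Lemma tmul_basis p q : mul (tbasis F p) (tbasis F q) = tcoef p q *: tbasis F (txor p q).
Proof.
apply/ffunP => r; rewrite tmulE ffun_scaleE tbasisE (bigD1 p) //= big1 ?addr0 => [|s ns].
  rewrite !tbasisE eqxx mul1r txor_eq.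
  by case: eqP => [->|_]; rewrite ?txorKl ?mulr1 ?mul1r ?mulr0 ?mul0r.
by rewrite tbasisE (negPf ns) !mul0r.
Qed.

Lemma tcoef_assoc p s r :
  tcoef p (txor p s) * tcoef s (txor s r)
  = tcoef (txor p s) (txor s r) * tcoef p (txor p r).
Proof. by rewrite /tcoef /= mulrACA !qcoef_assoc mulrACA. Qed.

Lemma tmulA x y z : mul (mul x y) z = mul x (mul y z).
Proof.
apply/ffunP => r; rewrite !tmulE.
under eq_bigr do rewrite tmulE !mulr_suml.
rewrite exchange_big /=; apply: eq_bigr => p _.
rewrite tmulE mulr_sumr mulr_suml (reindex_inj (can_inj (txorKl p))) /=.
apply: eq_bigr => s _; have := tcoef_assoc p (txor p s) r.
rewrite !txorKl -txorCA !txorA => H; ring: H.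
Qed.

Lemma tmulDl x y z : mul (x + y) z = mul x z + mul y z.
Proof.
apply/ffunP => r; rewrite ffun_addE !tmulE -big_split; apply: eq_bigr => p _.
by rewrite ffun_addE !mulrDl.
Qed.

Lemma tmulDr x y z : mul z (x + y) = mul z x + mul z y.
Proof.
apply/ffunP => r; rewrite ffun_addE !tmulE -big_split; apply: eq_bigr => p _.
by rewrite ffun_addE mulrDr mulrDl.
Qed.

Lemma tmulZl k x z : mul (k *: x) z = k *: mul x z.
Proof.
apply/ffunP => r; rewrite ffun_scaleE !tmulE mulr_sumr; apply: eq_bigr => p _.
by rewrite ffun_scaleE !mulrA.
Qed.

Lemma tmulZr k x z : mul z (k *: x) = k *: mul z x.
Proof.
apply/ffunP => r; rewrite ffun_scaleE !tmulE mulr_sumr; apply: eq_bigr => p _.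
by rewrite ffun_scaleE; ring.
Qed.

Lemma tcoef0l r : tcoef tidx0 r = 1.
Proof. by case: r => [[[] []] [[] []]]; rewrite /tcoef /qcoef /= !mulr1. Qed.

Lemma tcoef0r r : tcoef r tidx0 = 1.
Proof. by case: r => [[[] []] [[] []]]; rewrite /tcoef /qcoef /= ?mulr1 ?mul1r. Qed.

Lemma tmul1l x : mul (tone F) x = x.
Proof.
apply/ffunP => r; rewrite tmulE (bigD1 tidx0) //= big1 ?addr0 => [|p np].
  by rewrite toneE eqxx mul1r tcoef0l mulr1 txorC txor0.
by rewrite toneE (negPf np) !mul0r.
Qed.

Lemma tmul1r x : mul x (tone F) = x.
Proof.
apply/ffunP => r; rewrite tmulE (bigD1 r) //= big1 ?addr0 => [|p np].
  by rewrite toneE txorxx eqxx mulr1 tcoef0r mulr1.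
by rewrite toneE txor_eq txor0 eq_sym (negPf np) mulr0 mul0r.
Qed.

Lemma tTrdE z : tTrd z = z tidx0 * 4%:R.
Proof.
rewrite /tTrd (bigD1 tidx0) //= big1 ?addr0 => [|[p1 p2] np].
  by rewrite /qTrd !qbasisE /= !mulr1 -natrM.
rewrite /qTrd !qbasisE.
by case: p1 p2 np => [[] []] [[] []] //= _; rewrite !(mulr0, mul0r).
Qed.

Lemma tTrdD x y : tTrd (x + y) = tTrd x + tTrd y.
Proof. by rewrite !tTrdE ffun_addE mulrDl. Qed.

Lemma tTrdZ k x : tTrd (k *: x) = k * tTrd x.
Proof. by rewrite !tTrdE ffun_scaleE mulrA. Qed.

Lemma tTrdC x y : tTrd (mul x y) = tTrd (mul y x).
Proof.
rewrite !tTrdE !tmulE; congr (_ * _); apply: eq_bigr => p _.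
by rewrite txor0 (mulrC (x p)).
Qed.

Lemma tgammaE z r : tgamma z r = tsign r * z r.
Proof.
rewrite /tgamma /tmap sum_ffunE (bigD1 r) //= big1 ?addr0 => [|p np].
  by rewrite !qgamma_basis tpureZ !ffun_scaleE tbasisE eqxx mulr1 mulrC.
by rewrite !qgamma_basis tpureZ !ffun_scaleE tbasisE eq_sym (negPf np) !mulr0.
Qed.

Lemma tgamma_tbasis p : tgamma (tbasis F p) = tsign p *: tbasis F p.
Proof.
by apply/ffunP => r; rewrite tgammaE ffun_scaleE !tbasisE; case: eqP => [->|]; rewrite ?mulr0.
Qed.

Lemma tsignK p : tsign p * tsign p = 1.
Proof. by case: p => [[[] []] [[] []]]; rewrite /tsign /qsign /=; ring. Qed.

Lemma tgammaK z : tgamma (tgamma z) = z.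
Proof. by apply/ffunP => r; rewrite !tgammaE mulrA tsignK mul1r. Qed.

Lemma tgammaD x y : tgamma (x + y) = tgamma x + tgamma y.
Proof. by apply/ffunP => r; rewrite ffun_addE !tgammaE ffun_addE mulrDr. Qed.

Lemma tgammaZ k x : tgamma (k *: x) = k *: tgamma x.
Proof. by apply/ffunP => r; rewrite ffun_scaleE !tgammaE ffun_scaleE mulrCA. Qed.

Lemma tgamma1 : tgamma (tone F) = tone F.
Proof.
by rewrite -[tone F]/(tbasis F tidx0) tgamma_tbasis /tsign /qsign /= mulr1 scale1r.
Qed.

Lemma tTrd_gamma z : tTrd (tgamma z) = tTrd z.
Proof. by rewrite !tTrdE tgammaE /tsign /qsign /= !mul1r. Qed.

Lemma tcoef_rev p r :
  tsign r * tcoef p (txor p r) = tsign (txor p r) * tsign p * tcoef (txor p r) p.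
Proof.
have := qcoef_rev a1 b1 p.1 r.1; have := qcoef_rev a2 b2 p.2 r.2.
rewrite /tsign /tcoef /= => H2 H1; ring: H1 H2.
Qed.

Lemma tgamma_mul x y : tgamma (mul x y) = mul (tgamma y) (tgamma x).
Proof.
apply/ffunP => r; rewrite tgammaE !tmulE mulr_sumr.
rewrite [RHS](reindex_inj (can_inj (g := txor ^~ r) (txorK ^~ r))) /=; apply: eq_bigr => p _.
rewrite !tgammaE txorK; have := tcoef_rev p r => H; ring: H.
Qed.

Lemma not_scalar_coord z : (forall k, z != k *: tone F) -> exists2 r, r != tidx0 & z r != 0.
Proof.
move=> z_nscal; have [/existsP[r /andP[]] | /existsPn z_scal] :=
  boolP [exists r, (r != tidx0) && (z r != 0)]; first by exists r.
case/negP: (z_nscal (z tidx0)).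
apply/eqP/ffunP => r; rewrite ffun_scaleE toneE.
have [-> | r_neq0] := eqVneq r tidx0; first by rewrite mulr1.
by move: (z_scal r); rewrite r_neq0 negbK => /eqP ->; rewrite mulr0.
Qed.

End Tensor.

Definition tfactor (s : bool) (p : qidx) : tidx :=
  if s then ((false, false), p) else (p, (false, false)).
Definition tcofactor (s : bool) (r : tidx) : qidx := if s then r.1 else r.2.

Lemma tcofactorD s p q : tcofactor s (txor p q) = qxor (tcofactor s p) (tcofactor s q).
Proof. by case: s. Qed.

Lemma tcofactor_factor s p : tcofactor s (tfactor s p) = (false, false).
Proof. by case: s. Qed.

Lemma tfactor_inj s : injective (tfactor s).
Proof. by case: s => p q [->]. Qed.

Lemma tcofactor_neq0 r : r != tidx0 -> tcofactor (r.1 != (false, false)) r != (false, false).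
Proof. by case: r => [[[] []] [[] []]]. Qed.

Definition qidx_enum : seq qidx :=
  [:: (false, false); (true, false); (false, true); (true, true)].

Section FactorBasis.
Variable F : fieldType.

Definition factor_basis_ext s (w : tens F) (i : 'I_5) : tens F :=
  if (i < 4)%N then tbasis F (tfactor s (nth (false, false) qidx_enum i)) else w.

Lemma factor_basis_ext_free s (w : tens F) r :
  tcofactor s r != (false, false) -> w r != 0 -> free_family (factor_basis_ext s w).
Proof.
move=> cor wr_neq0.
pose ri (i : 'I_5) := if (i < 4)%N then tfactor s (nth (false, false) qidx_enum i) else r.
apply: (@triangular_free _ _ _ _ ri) => [i | i j ltji]; rewrite /factor_basis_ext /ri.
  by case: ifP => // _; rewrite tbasisE eqxx oner_neq0.
have ltj4 : (j < 4)%N by rewrite (leq_trans ltji) // -ltnS.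
rewrite ltj4 tbasisE; case: ifP => [lti4 | _].
  by rewrite (inj_eq (@tfactor_inj s)) nth_uniq // gtn_eqF.
by case: (r =P _) cor => // ->; rewrite tcofactor_factor eqxx.
Qed.

Lemma tfactor_unit_or_skew s p :
  tbasis F (tfactor s p) = tone F
  \/ tgamma (tbasis F (tfactor s p)) = - tbasis F (tfactor s p).
Proof.
have [-> | p_neq0] := eqVneq p (false, false); first by case: s; left.
right; rewrite tgamma_tbasis -scaleN1r; congr (_ *: _).
by case: s; case: p p_neq0 => [[] []]; rewrite /tsign /qsign //= ?mulr1 ?mul1r.
Qed.

End FactorBasis.

Section Form.
Variables (F : fieldType) (a1 b1 a2 b2 : F) (u : tens F).
Local Notation mul := (tmul a1 b1 a2 b2).
Implicit Types x y z : tens F.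

Definition bform x y : F := tTrd (mul (mul x u) (tgamma y)).

Lemma bform_sym x y : tgamma u = u -> bform x y = bform y x.
Proof.
move=> u_sym; rewrite /bform -[RHS]tTrd_gamma !tgamma_mul tgammaK u_sym.
by rewrite tmulA.
Qed.

Lemma tot_isotropic_of_orthogonal n (x : 'I_n -> tens F) :
  free_family x -> (forall i j, bform (x i) (x j) = 0) ->
  has_tot_isotropic_subspace (qform a1 b1 a2 b2 u) n.
Proof.
move=> x_free x_orth; exists x; split => // c.
have bformD y : {morph bform^~ y : z1 z2 / z1 + z2 >-> z1 + z2}.
  by move=> z1 z2; rewrite /bform !tmulDl tTrdD.
have bformDr y : {morph bform y : z1 z2 / z1 + z2 >-> z1 + z2}.
  by move=> z1 z2; rewrite /bform tgammaD tmulDr tTrdD.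
have bform0 y : bform 0 y = 0 /\ bform y 0 = 0.
  by rewrite /bform -(scale0r 0) tgammaZ tmulZr !tmulZl !tTrdZ !mul0r.
rewrite -[qform _ _ _ _ _ _]/(bform _ _).
rewrite (big_morph _ (bformD _) (proj1 (bform0 _))) big1 // => i _.
rewrite (big_morph _ (bformDr _) (proj2 (bform0 _))) big1 // => j _.
by rewrite /bform tgammaZ tmulZr !tmulZl !tTrdZ -/(bform _ _) x_orth !mulr0.
Qed.

Lemma bform_factor_support s x y :
  (forall r, tcofactor s r != (false, false) -> x r = 0) ->
  (forall r, tcofactor s r != (false, false) -> y r = 0) ->
  (forall r, tcofactor s r = (false, false) -> u r = 0) ->
  bform x y = 0.
Proof.
move=> x0 y0 u0.
have xu0 r : tcofactor s r = (false, false) -> mul x u r = 0.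
  move=> cor; rewrite tmulE big1 // => p _.
  have [cop|cop] := eqVneq (tcofactor s p) (false, false).
    by rewrite u0 ?mulr0 ?mul0r // tcofactorD cop cor.
  by rewrite x0 // !mul0r.
rewrite /bform tTrdE tmulE big1 ?mul0r // => p _.
have [cop|cop] := eqVneq (tcofactor s p) (false, false); first by rewrite xu0 // !mul0r.
by rewrite tgammaE txor0 y0 // !mulr0 mul0r.
Qed.

Lemma bform_factor_basis s p q :
  (forall r, tcofactor s r = (false, false) -> u r = 0) ->
  bform (tbasis F (tfactor s p)) (tbasis F (tfactor s q)) = 0.
Proof.
have basis0 t r : tcofactor s r != (false, false) -> tbasis F (tfactor s t) r = 0.
  by rewrite tbasisE; case: (r =P tfactor s t) => // ->; rewrite tcofactor_factor eqxx.
by apply: bform_factor_support => r /basis0.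
Qed.

End Form.

Section SymmetricTraceZero.
Variables (F : fieldType) (a1 b1 a2 b2 : F).
Hypothesis two_neq0 : 2%:R != 0 :> F.
Variable u : tens F.
Hypotheses (u_sym : tgamma u = u) (u_trd : tTrd u = 0).
Local Notation mul := (tmul a1 b1 a2 b2).
Implicit Types x y z : tens F.

Lemma trace_mul_skew_sym y z : tgamma y = - y -> tgamma z = z -> tTrd (mul y z) = 0.
Proof.
move=> y_skew z_sym; apply: self_opp_eq0 => //.
rewrite -{1}tTrd_gamma tgamma_mul z_sym y_skew -scaleN1r tmulZr tTrdZ mulN1r.
by rewrite tTrdC.
Qed.

Lemma tsym_trace0_support s r : tcofactor s r = (false, false) -> u r = 0.
Proof.
move=> cor; have [-> | r_neq0] := eqVneq r tidx0.
  move: u_trd; rewrite tTrdE -[4%N]/(2 * 2)%N natrM => /eqP.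
  by rewrite !mulf_eq0 orbb (negPf two_neq0) orbF => /eqP.
have sign_r : tsign F r = -1.
  move: cor r_neq0; case: s; case: r => [[[] []] [[] []]] //= _ _;
  by rewrite /tsign /qsign /= ?mul1r ?mulr1.
apply: self_opp_eq0 => //.
by rewrite -{1}u_sym tgammaE sign_r mulN1r.
Qed.

Lemma tot_isotropic5_of_twisted_sym (A : tens F) (lam : F) :
  mul (tgamma A) u = mul u A -> mul A A = lam *: tone F -> tTrd (mul u A) = 0 ->
  (forall k, A != k *: tone F) -> has_tot_isotropic_subspace (qform a1 b1 a2 b2 u) 5.
Proof.
move=> twist sqrA trd_uA A_nscal; pose w := tgamma A.
have uA_sym : tgamma (mul u A) = mul u A by rewrite tgamma_mul u_sym twist.
have orth_w y : y = tone F \/ tgamma y = - y -> bform a1 b1 a2 b2 u y w = 0.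
  rewrite /bform tgammaK tmulA => -[-> | y_skew]; first by rewrite tmul1l.
  exact: trace_mul_skew_sym.
have orth_ww : bform a1 b1 a2 b2 u w w = 0.
  by rewrite /bform tgammaK twist tmulA sqrA tmulZr tmul1r tTrdZ u_trd mulr0.
have [r r_neq0 wr_neq0] : exists2 r, r != tidx0 & w r != 0.
  apply: not_scalar_coord => k; apply: contra (A_nscal k) => /eqP wk.
  by rewrite -[A]tgammaK -/w wk tgammaZ tgamma1.
have cor := tcofactor_neq0 r_neq0.
apply: (tot_isotropic_of_orthogonal (factor_basis_ext_free cor wr_neq0)) => i j.
rewrite /factor_basis_ext; case: ifP => _; case: ifP => _.
- exact/bform_factor_basis/tsym_trace0_support.
- exact/orth_w/tfactor_unit_or_skew.
- by rewrite bform_sym //; apply/orth_w/tfactor_unit_or_skew.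
- exact: orth_ww.
Qed.

End SymmetricTraceZero.

Section PureTensor.
Variables (F : fieldType) (a b c d : F).

Definition i_tensor (al be : F) : tens F :=
  al *: tbasis F ((true, false), (true, false))
  + be *: tbasis F ((true, false), (false, true)).

Lemma tgamma_i_tensor al be : tgamma (i_tensor al be) = i_tensor al be.
Proof.
by rewrite tgammaD !tgammaZ !tgamma_tbasis /tsign /qsign /= mulrNN mulr1 !scale1r.
Qed.

Lemma i_tensor_sqr al be :
  tmul a b c d (i_tensor al be) (i_tensor al be)
  = (al ^+ 2 * (a * c) + be ^+ 2 * (a * d)) *: tone F.
Proof.
rewrite !(tmulDl, tmulDr, tmulZl, tmulZr) !tmul_basis /tcoef /qcoef /=.
apply/ffunP => r; rewrite !(ffun_addE, ffun_scaleE) !tbasisE.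
by set e := (r == _)%:R; set e' := (r == _)%:R; ring.
Qed.

Lemma i_tensor_neq_scalar al be k : (al, be) != (0, 0) -> i_tensor al be != k *: tone F.
Proof.
apply: contraNneq => /ffunP eq_scal; rewrite xpair_eqE.
have := eq_scal ((true, false), (true, false)).
have := eq_scal ((true, false), (false, true)).
rewrite !(ffun_addE, ffun_scaleE) !tbasisE !toneE /= !(mulr0, mulr1, addr0, add0r).
by move=> -> ->; rewrite eqxx.
Qed.

End PureTensor.

Theorem lemma4p3 (F : fieldType) (char_not2 : (2%:R : F) != 0)
  (a1 b1 a2 b2 a3 b3 a4 b4 : F)
  (ha1 : a1 != 0) (hb1 : b1 != 0) (ha2 : a2 != 0) (hb2 : b2 != 0)
  (ha3 : a3 != 0) (hb3 : b3 != 0) (ha4 : a4 != 0) (hb4 : b4 != 0)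
  (u v : tens F)
  (huv : tmul a1 b1 a2 b2 u v = tone F) (hvu : tmul a1 b1 a2 b2 v u = tone F)
  (hu_sym : tgamma u = u) (hu_trd : tTrd u = 0)
  (phi : tens F -> tens F)
  (phi_lin : forall (k : F) (x y : tens F), phi (k *: x + y) = k *: phi x + phi y)
  (phi_bij : bijective phi)
  (phi_one : phi (tone F) = tone F)
  (phi_mul : forall x y : tens F,
      phi (tmul a3 b3 a4 b4 x y) = tmul a1 b1 a2 b2 (phi x) (phi y))
  (phi_inv : forall x : tens F,
      phi (tgamma x) = tmul a1 b1 a2 b2 (tmul a1 b1 a2 b2 v (tgamma (phi x))) u) :
  has_tot_isotropic_subspace (qform a1 b1 a2 b2 u) 5.
Proof.
(* The a_i, b_i need not be nonzero: only the multiplication tables are used. *)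
have phiZ : scalable phi := scalable_linear phi_lin.
pose trd_u X := tTrd (tmul a1 b1 a2 b2 u (phi X)).
have [al [be [albe_neq0 albe_ker]]] := exists_nonzero_kernel2
  (trd_u (tbasis F ((true, false), (true, false))))
  (trd_u (tbasis F ((true, false), (false, true)))).
pose X := i_tensor al be; pose A := phi X.
apply: (tot_isotropic5_of_twisted_sym char_not2 hu_sym hu_trd (A := A)).
- have := phi_inv X; rewrite tgamma_i_tensor -/A => A_eq.
  by rewrite [in RHS]A_eq -!tmulA huv tmul1l.
- by rewrite -phi_mul i_tensor_sqr phiZ phi_one.
- rewrite /A /X /i_tensor phi_lin !phiZ tmulDr !tmulZr tTrdD !tTrdZ; exact: albe_ker.
- move=> k; apply: contra (i_tensor_neq_scalar k albe_neq0) => /eqP A_scal.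
  by apply/eqP/(bij_inj phi_bij); rewrite phiZ phi_one -A_scal.
Qed.
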